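(* Let $C$ and $D$ be $R$-linear codes of length $n$. Then \[ \mathrm{CJ}^{\mathrm{av}}_{C,D}(x_{ij}\ \text{with}\ i,j\in K)=\sum_{\eta}A_r^C\,A_s^D\,\frac{\prod_{i=0}^{|R|-1}\binom{s_i}{\eta_{\omega_0\omega_i},\dots,\eta_{\omega_{|R|-1}\omega_i}}}{\binom{n}{r_0,\dots,r_{|R|-1}}}\prod_{i,j=0}^{|R|-1}x_{ij}^{\eta_{\omega_i\omega_j}}. \] The sum runs over all bi-compositions $\eta=(\eta_{\alpha\beta})_{(\alpha,\beta)\in R^2}$ of $n$, i.e. non-negative integers with $\sum_{\alpha,\beta}\eta_{\alpha\beta}=n$. For each $\eta$, the compositions $r,s$ of $n$ are determined by \[ r_i=\sum_{\beta\in R}\eta_{\omega_i\beta},\qquad s_i=\sum_{\alpha\in R}\eta_{\alpha\omega_i}\qquad (i\in K). \]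
   Context: $R$ denotes either the finite field $\mathbb F_q$ or the ring $\mathbb Z_k$ ($k\ge2$). Its elements are listed in a fixed order $0=\omega_0,\dots,\omega_{|R|-1}$, and $K=\{0,\dots,|R|-1\}$. An $R$-linear code of length $n$ is an $\mathbb F_q$-subspace of $\mathbb F_q^n$, respectively an additive subgroup of $\mathbb Z_k^n$. A composition of $n$ is a vector $s=(s_0,\dots,s_{|R|-1})$ of non-negative integers summing to $n$. For $u\in R^n$, $\mathrm{comp}(u)=(s_0(u),\dots,s_{|R|-1}(u))$, where $s_i(u)$ is the number of coordinates of $u$ equal to $\omega_i$. $A_s^C$ denotes the number of $u\in C$ with $\mathrm{comp}(u)=s$. For $u,v\in R^n$, $\eta_{\alpha\beta}(u,v)=\#\{i:(u_i,v_i)=(\alpha,\beta)\}$. The complete joint weight enumerator is \[ \mathrm{CJE}_{C,D}(x_{ij})=\sum_{u\in C,v\in D}\prod_{i,j}x_{ij}^{\eta_{\omega_i\omega_j}(u,v)}. \] For $\sigma\in S_n$, set $u^\sigma=(u_{\sigma(1)},\dots,u_{\sigma(n)})$ and $C^\sigma=\{u^\sigma:u\in C\}$. The average complete joint weight enumerator is \[ \mathrm{CJ}^{\mathrm{av}}_{C,D}(x_{ij})=\frac1{n!}\sum_{\sigma\in S_n}\mathrm{CJE}_{C^\sigma,D}(x_{ij}). \] The multinomial coefficient is $\binom{a}{b_0,\dots,b_m}=a!/(b_0!\cdots b_m!)$. *)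

From HB Require Import structures.
From mathcomp Require Import all_boot all_order all_algebra all_fingroup.
From mathcomp Require Import mpoly.
Set Implicit Arguments. Unset Strict Implicit. Unset Printing Implicit Defensive.
Import GRing.Theory.
Local Open Scope ring_scope.

Definition field_or_Zk (R : finComUnitRingType) : Prop :=
  (forall x : R, x != 0 -> x \is a GRing.unit) \/
  (exists k : nat, (1 < k)%N /\
     exists f : {rmorphism 'Z_k -> R}, bijective f).

(* R-linear code: F_q-subspace resp. additive subgroup of Z_k^n; in both
   cases exactly an R-submodule of R^n. *)
Definition linear_code (R : finComUnitRingType) (n : nat) (C : {set 'rV[R]_n}) : Prop :=
  [/\ (0 : 'rV[R]_n) \in C,
      forall u v, u \in C -> v \in C -> u + v \in C &
      forall (a : R) u, u \in C -> a *: u \in C].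

Definition compo (R : finComUnitRingType) (n : nat) (u : 'rV[R]_n) (a : R) : nat :=
  #|[set i : 'I_n | u ord0 i == a]|.

Definition A_comp (R : finComUnitRingType) (n : nat) (C : {set 'rV[R]_n})
  (s : R -> nat) : nat :=
  #|[set u in C | [forall a, compo u a == s a]]|.

Definition eta (R : finComUnitRingType) (n : nat) (u v : 'rV[R]_n) (a b : R) : nat :=
  #|[set i : 'I_n | (u ord0 i == a) && (v ord0 i == b)]|.

(* the variable x_{ij} attached to the pair (omega_i, omega_j) *)
Definition xvar (R : finComUnitRingType) (a b : R) : {mpoly rat[#|{: R * R}|]} :=
  'X_(enum_rank (a, b)).

Definition CJE (R : finComUnitRingType) (n : nat) (C D : {set 'rV[R]_n})
  : {mpoly rat[#|{: R * R}|]} :=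
  \sum_(u in C) \sum_(v in D) \prod_(p : R * R) xvar p.1 p.2 ^+ eta u v p.1 p.2.

Definition permrow (R : finComUnitRingType) (n : nat) (s : 'S_n) (u : 'rV[R]_n)
  : 'rV[R]_n := \row_i u ord0 (s i).
Definition permcode (R : finComUnitRingType) (n : nat) (s : 'S_n) (C : {set 'rV[R]_n})
  : {set 'rV[R]_n} := [set permrow s u | u in C].

Definition CJav (R : finComUnitRingType) (n : nat) (C D : {set 'rV[R]_n})
  : {mpoly rat[#|{: R * R}|]} :=
  (n`!%:R : rat)^-1 *: \sum_(s : 'S_n) CJE (permcode s C) D.

Definition multinom (I : finType) (a : nat) (b : I -> nat) : rat :=
  (a`!)%:R / (\prod_(i : I) ((b i)`!)%:R).

Definition bicomp (R : finComUnitRingType) (n : nat) (e : {ffun R * R -> 'I_n.+1}) : bool :=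
  (\sum_(p : R * R) (e p : nat))%N == n.

Definition rowsum (R : finComUnitRingType) (n : nat) (e : {ffun R * R -> 'I_n.+1}) (a : R) : nat :=
  (\sum_(b : R) (e (a, b) : nat))%N.
Definition colsum (R : finComUnitRingType) (n : nat) (e : {ffun R * R -> 'I_n.+1}) (b : R) : nat :=
  (\sum_(a : R) (e (a, b) : nat))%N.

Definition CJav_formula (R : finComUnitRingType) (n : nat) (C D : {set 'rV[R]_n})
  : {mpoly rat[#|{: R * R}|]} :=
  \sum_(e : {ffun R * R -> 'I_n.+1} | bicomp e)
    ((((A_comp C (rowsum e))%:R * (A_comp D (colsum e))%:R : rat)
      * (\prod_(b : R) multinom (colsum e b) (fun a => (e (a, b) : nat)))
      / multinom n (rowsum e))
     *: \prod_(p : R * R) xvar p.1 p.2 ^+ (e p : nat)).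

From Pilot Require Import Defs.
From mathcomp Require Import all_boot all_order all_algebra all_fingroup.
From mathcomp Require Import mpoly zify.
Set Implicit Arguments. Unset Strict Implicit. Unset Printing Implicit Defensive.

(* Expanding CJav C D = (1/n!) sum_s sum_(u in C, v in D) x^(eta(u^s, v)) and
   grouping the permutations s by the joint composition e = eta(u^s, v), the
   coefficient of x^e is (1/n!) sum_(u in C, v in D) N(u, v, e), where
   N(u, v, e) = #{s | eta(u^s, v) = e}.  This number vanishes unless
   comp u = r(e) and comp v = s(e) (the row and column sums of e).  In that
   case N(u, v, e) only depends on comp u, since two rows with the same
   composition differ by a coordinate permutation; summing over the K(r) rows
   of composition r and double counting gives N * K(r) = n! * W(v, e), where
   W(v, e) counts the rows w with eta(w, v) = e.  A multinomial count of words
   (proved by induction on the length) yields W * prod_p e_p! = prod_b s_b!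
   and, for a constant second word, K(r) * prod_a r_a! = n!.  Together these
   identify N/n! with the ratio of multinomial coefficients in the theorem. *)

Lemma card_set_indicator (T : finType) (Q : pred T) :
  #|[set i | Q i]| = \sum_i (Q i : nat).
Proof. by rewrite -sum1dep_card big_mkcond /=; apply: eq_bigr => i _; case: (Q i). Qed.

Section WordCounting.
Variables (A B : finType).

Definition ffcons n (x : A) (w : {ffun 'I_n -> A}) : {ffun 'I_n.+1 -> A} :=
  [ffun i => if unlift ord0 i is Some j then w j else x].

Lemma ffcons0 n (x : A) w : @ffcons n x w ord0 = x.
Proof. by rewrite ffunE unlift_none. Qed.

Lemma ffconsS n (x : A) w j : @ffcons n x w (lift ord0 j) = w j.
Proof. by rewrite ffunE liftK. Qed.

Lemma sum_ffcons n (F : {ffun 'I_n.+1 -> A} -> nat) :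
  \sum_w F w = \sum_x \sum_(w : {ffun 'I_n -> A}) F (ffcons x w).
Proof.
rewrite pair_big /= [LHS](reindex (fun p : A * {ffun 'I_n -> A} => ffcons p.1 p.2)) //=.
exists (fun w => (w ord0, [ffun j => w (lift ord0 j)])).
- move=> [x w] _ /=; rewrite ffcons0; congr pair; apply/ffunP=> j; by rewrite ffunE ffconsS.
- move=> w _ /=; apply/ffunP => i; rewrite ffunE; case: unliftP => [j ->|->]; by rewrite ?ffunE.
Qed.

Definition fibre n (v : 'I_n -> B) (b : B) : nat := #|[set i | v i == b]|.
Definition joint n (w : 'I_n -> A) (v : 'I_n -> B) (p : A * B) : nat :=
  #|[set i | (w i == p.1) && (v i == p.2)]|.

Definition nlifts n (v : 'I_n -> B) (e : A * B -> nat) : nat :=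
  #|[set w : {ffun 'I_n -> A} | [forall p, joint w v p == e p]]|.

Lemma joint_marginal n (w : 'I_n -> A) (v : 'I_n -> B) b :
  \sum_a joint w v (a, b) = fibre v b.
Proof.
rewrite /fibre card_set_indicator.
under eq_bigr => a _ do rewrite /joint card_set_indicator.
rewrite exchange_big /=; apply: eq_bigr => i _.
rewrite (bigD1 (w i)) //= eqxx big1 ?addn0 // => a /negbTE na.
by rewrite eq_sym na.
Qed.

Lemma card_set_ord_recl n (Q : pred 'I_n.+1) :
  #|[set i | Q i]| = Q ord0 + #|[set j | Q (lift ord0 j)]|.
Proof. by rewrite !card_set_indicator big_ord_recl. Qed.

Lemma joint_ffcons n x (w : {ffun 'I_n -> A}) (v : 'I_n.+1 -> B) p :
  joint (ffcons x w) v p = ((x, v ord0) == p) + joint w (v \o lift ord0) p.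
Proof.
case: p => a b; rewrite /joint card_set_ord_recl ffcons0 xpair_eqE /=.
by congr addn; apply: eq_card => j; rewrite !inE ffconsS.
Qed.

Lemma fibre_recl n (v : 'I_n.+1 -> B) b :
  fibre v b = (v ord0 == b) + fibre (v \o lift ord0) b.
Proof. exact: card_set_ord_recl. Qed.

Definition jcut (e : A * B -> nat) (q : A * B) (p : A * B) : nat := e p - (q == p).

Lemma jcut_fact (e : A * B -> nat) q :
  0 < e q -> \prod_p (e p)`! = e q * \prod_p (jcut e q p)`!.
Proof.
move=> e_pos; rewrite (bigD1 q) // [in RHS](bigD1 q) //= mulnA; congr muln.
  by rewrite /jcut eqxx -(prednK e_pos) factS subn1.
by apply: eq_bigr => p /negbTE pn; rewrite /jcut eq_sym pn subn0.
Qed.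

Lemma jcut_marginal n (v : 'I_n.+1 -> B) (e : A * B -> nat) x :
  (forall b, \sum_a e (a, b) = fibre v b) -> 0 < e (x, v ord0) ->
  forall b, \sum_a jcut e (x, v ord0) (a, b) = fibre (v \o lift ord0) b.
Proof.
move=> he e_pos b; move: (he b); rewrite fibre_recl (bigD1 x) //= => he_b.
rewrite (bigD1 x) //= (eq_bigr (fun a => e (a, b))) => [|a /negbTE ax]; last first.
  by rewrite /jcut xpair_eqE eq_sym ax subn0.
rewrite /jcut xpair_eqE eqxx /= in he_b *.
by case: (eqVneq (v ord0) b) => [<-|_] in he_b *; lia.
Qed.

(* Choosing the first letter x of w consumes one occurrence of (x, v 0). *)
Lemma nlifts_recl n (v : 'I_n.+1 -> B) e :
  nlifts v e = \sum_(x | 0 < e (x, v ord0)) nlifts (v \o lift ord0) (jcut e (x, v ord0)).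
Proof.
rewrite /nlifts card_set_indicator sum_ffcons [RHS]big_mkcond /=.
apply: eq_bigr => x _; case: (posnP (e (x, v ord0))) => [e0|e_pos] /=.
  apply: big1 => w _; case: forallP => // /(_ (x, v ord0)).
  by rewrite joint_ffcons eqxx e0.
rewrite card_set_indicator; apply: eq_bigr => w _; congr nat_of_bool.
apply: eq_forallb => p; rewrite joint_ffcons /jcut.
by case: (eqVneq (x, v ord0) p) => [<-|_] /=; apply/eqP/eqP; lia.
Qed.

Lemma nlifts_fact n (v : 'I_n -> B) (e : A * B -> nat) :
  (forall b, \sum_a e (a, b) = fibre v b) ->
  nlifts v e * \prod_p (e p)`! = \prod_b (fibre v b)`!.
Proof.
elim: n v e => [|n IH] v e he.
  have e0 p : e p = 0.
    case: p => a b; move/eqP: (he b); rewrite /fibre card_set_indicator big_ord0.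
    by rewrite sum_nat_eq0 => /forallP /(_ a) /eqP.
  have -> : nlifts v e = #|{ffun 'I_0 -> A}|.
    apply: eq_card => w; rewrite !inE; apply/forallP => p.
    by rewrite /joint card_set_indicator big_ord0 e0.
  rewrite card_ffun card_ord expn0 mul1n !big1 // => p _; rewrite ?e0 //.
  by rewrite /fibre card_set_indicator big_ord0.
set b0 := v ord0; set v' := v \o lift ord0.
rewrite nlifts_recl big_distrl /=.
under eq_bigr => x e_pos do
  rewrite (jcut_fact e_pos) mulnCA (IH _ _ (jcut_marginal he e_pos)).
have sum_pos : \sum_(x | 0 < e (x, b0)) e (x, b0) = (fibre v' b0).+1.
  move: (he b0); rewrite fibre_recl -/b0 -/v' eqxx add1n => <-.
  by rewrite big_mkcond; apply: eq_bigr => x _; case: posnP => // ->.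
rewrite -big_distrl /= sum_pos [RHS](bigD1 b0) //= fibre_recl -/b0 -/v' eqxx factS -mulnA.
congr muln; rewrite (bigD1 b0) //=; congr muln.
by apply: eq_bigr => b /negbTE nb; rewrite fibre_recl eq_sym nb.
Qed.

Lemma sum_fibre n (v : 'I_n -> B) : \sum_b fibre v b = n.
Proof.
under eq_bigr => b _ do rewrite /fibre card_set_indicator.
rewrite exchange_big /= -[RHS](card_ord n) -sum1_card; apply: eq_bigr => i _.
by rewrite (bigD1 (v i)) //= eqxx big1 // => b /negbTE nb; rewrite eq_sym nb.
Qed.

End WordCounting.

Lemma joint_swap (A B : finType) n (w : 'I_n -> A) (v : 'I_n -> B) a b :
  joint w v (a, b) = joint v w (b, a).
Proof. by apply: eq_card => i; rewrite !inE andbC. Qed.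

Lemma card_rows (T : finType) n (P : pred 'rV[T]_n) :
  #|[set w | P w]| = #|[set f : {ffun 'I_n -> T} | P (\row_i f i)%R]|.
Proof.
rewrite -(card_imset _ (f := fun f : {ffun 'I_n -> T} => (\row_i f i)%R)); last first.
  by move=> f g /rowP fg; apply/ffunP => i; move: (fg i); rewrite !mxE.
congr #|pred_of_set _|; apply/setP => w; rewrite inE.
apply/idP/imsetP => [Pw|[f]]; last by rewrite inE => Pf ->.
have ew : (\row_i [ffun i => w ord0 i] i)%R = w.
  by apply/rowP => i; rewrite mxE ffunE ord1.
by exists [ffun i => w ord0 i]; rewrite ?inE ew.
Qed.

Section JointTypes.
Variables (R : finComUnitRingType) (n : nat).
Implicit Types (u v w : 'rV[R]_n) (e : R * R -> nat).

Lemma compoE w a : compo w a = fibre (fun i => w ord0 i) a.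
Proof. by []. Qed.

Lemma compo_rowsum w v a : compo w a = \sum_b eta w v a b.
Proof.
by rewrite compoE -(joint_marginal (fun i => v ord0 i)); apply: eq_bigr => b _; rewrite joint_swap.
Qed.

Lemma compo_colsum w v b : compo v b = \sum_a eta w v a b.
Proof. by rewrite compoE -(joint_marginal (fun i => w ord0 i)). Qed.

Lemma sum_eta w v : \sum_p eta w v p.1 p.2 = n.
Proof.
rewrite -(pair_bigA _ (fun a b => eta w v a b)) /= -[RHS](sum_fibre (fun i => w ord0 i)).
by apply: eq_bigr => a _; rewrite -compoE (compo_rowsum w v).
Qed.

Definition jtype w v : {ffun R * R -> 'I_n.+1} := [ffun p => inord (eta w v p.1 p.2)].

Definition has_jtype w v e : bool := [forall p, eta w v p.1 p.2 == e p].

Lemma eta_ltn w v a b : eta w v a b < n.+1.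
Proof. by rewrite ltnS -{2}(card_ord n) max_card. Qed.

Lemma jtypeP w v (e : {ffun R * R -> 'I_n.+1}) :
  (jtype w v == e) = has_jtype w v (fun p => e p).
Proof.
apply/eqP/forallP => [<- p | H]; first by rewrite ffunE inordK ?eta_ltn.
apply/ffunP => p; apply: ord_inj; rewrite ffunE inordK ?eta_ltn //; exact/eqP/H.
Qed.

Lemma bicomp_jtype w v : bicomp (jtype w v).
Proof.
rewrite /bicomp (eq_bigr (fun p => eta w v p.1 p.2)) ?sum_eta //.
by move=> p _; rewrite ffunE inordK ?eta_ltn.
Qed.

Lemma has_jtype_rowsum w v e a : has_jtype w v e -> compo w a = \sum_b e (a, b).
Proof.
by move/forallP=> H; rewrite (compo_rowsum w v); apply: eq_bigr => b _; exact/eqP/(H (a, b)).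
Qed.

Lemma has_jtype_colsum w v e b : has_jtype w v e -> compo v b = \sum_a e (a, b).
Proof.
by move/forallP=> H; rewrite (compo_colsum w v); apply: eq_bigr => a _; exact/eqP/(H (a, b)).
Qed.

Lemma card_has_jtype v e :
  (forall b, \sum_a e (a, b) = compo v b) ->
  #|[set w | has_jtype w v e]| * \prod_p (e p)`! = \prod_b (compo v b)`!.
Proof.
move=> he; rewrite card_rows -(nlifts_fact he); congr (_ * _).
apply: eq_card => f; rewrite !inE; apply: eq_forallb => -[a b].
by congr (_ == _); apply: eq_card => i; rewrite !inE mxE.
Qed.

Definition nwords (r : R -> nat) : nat :=
  #|[set w : 'rV[R]_n | [forall a, compo w a == r a]]|.

(* Multinomial theorem for compositions: the case of a constant second word. *)
Lemma nwords_fact (r : R -> nat) : \sum_a r a = n -> nwords r * \prod_a (r a)`! = n`!.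
Proof.
move=> hr; pose c : 'I_n -> 'I_1 := fun _ => ord0.
have fibre_c : fibre c ord0 = n.
  by rewrite -[RHS](card_ord n); apply: eq_card => i; rewrite !inE.
have marg (b : 'I_1) : \sum_a r a = fibre c b by rewrite ord1 fibre_c hr.
rewrite -fibre_c -(@big_ord1 nat 1 muln (fun b => (fibre c b)`!)).
rewrite -(@nlifts_fact R 'I_1 n c (fun p => r p.1) marg); congr (_ * _).
- rewrite /nwords card_rows; apply: eq_card => f; rewrite !inE.
  apply/forallP/forallP => [H [a b] | H a]; rewrite ?ord1;
    [move: (H a) | move: (H (a, ord0))] => /=;
    by congr (_ == _); apply: eq_card => i; rewrite !inE mxE andbT.
- rewrite -(pair_bigA _ (fun a (_ : 'I_1) => (r a)`!)) /=.
  by apply: eq_bigr => a _; rewrite big_ord1.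
Qed.

End JointTypes.

Section Permutations.
Variables (R : finComUnitRingType) (n : nat).
Implicit Types (u v w : 'rV[R]_n) (e : R * R -> nat).

Lemma permrow_inj (s : 'S_n) : injective (@permrow R n s).
Proof.
move=> u w /rowP us_ws; apply/rowP => i; move: (us_ws (s^-1 i)%g).
by rewrite !mxE permKV.
Qed.

Lemma permrowM (s t : 'S_n) u : permrow s (permrow t u) = permrow (s * t)%g u.
Proof. by apply/rowP => i; rewrite !mxE permM. Qed.

Lemma compo_permrow (s : 'S_n) u a : compo (permrow s u) a = compo u a.
Proof.
rewrite /compo -[RHS](card_preimset _ (@perm_inj _ s)).
by apply: eq_card => i; rewrite !inE mxE.
Qed.

Lemma permrow_of_compo u w : compo u =1 compo w -> exists s : 'S_n, w = permrow s u.
Proof.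
move=> same_compo.
have : perm_eq [tuple w ord0 i | i < n] [tuple u ord0 i | i < n].
  apply/allP => x _; apply/eqP; rewrite /= !count_map -!size_filter.
  by rewrite -!cardE; move: (same_compo x); rewrite /compo !cardsE.
case/tuple_permP => s /val_inj tuple_s; exists s; apply/rowP => i.
by move: (congr1 (fun t => tnth t i) tuple_s); rewrite /= !tnth_mktuple mxE => ->.
Qed.

Definition nperm u v e : nat := #|[set s : 'S_n | has_jtype (permrow s u) v e]|.

Lemma nperm_compo u w v e : compo u =1 compo w -> nperm u v e = nperm w v e.
Proof.
case/permrow_of_compo => p ->; rewrite /nperm -[LHS](card_preimset _ (mulIg p)).
by apply: eq_card => s; rewrite !inE permrowM.
Qed.

(* Double counting of the pairs (s, w) with (w^s, v) of joint composition e: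
   each s contributes the rows of joint composition e with v. *)
Lemma sum_nperm v e :
  \sum_(w in [set w | [forall a, compo w a == \sum_b e (a, b)]]) nperm w v e
  = n`! * #|[set w | has_jtype w v e]|.
Proof.
under eq_bigr => w _ do rewrite /nperm card_set_indicator.
rewrite exchange_big /= -card_Sn -sum_nat_const; apply: eq_bigr => s _.
rewrite -(card_preimset _ (@permrow_inj s)) card_set_indicator [LHS]big_mkcond /=.
apply: eq_bigr => w _; rewrite !inE.
case jt : (has_jtype (permrow s w) v e); last by case: ifP.
rewrite ifT //; apply/forallP => a.
by rewrite -(compo_permrow s) (has_jtype_rowsum a jt).
Qed.

(* nperm u v e only depends on the composition of u, so averaging over all
   rows of that composition evaluates it. *)
Lemma nperm_nwords u v e :
  (forall a, compo u a = \sum_b e (a, b)) ->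
  nperm u v e * nwords n (fun a => \sum_b e (a, b)) = n`! * #|[set w | has_jtype w v e]|.
Proof.
move=> hu; rewrite -(sum_nperm v e) /nwords.
rewrite (eq_bigr (fun _ => nperm u v e)) ?sum_nat_const 1?mulnC // => w.
by rewrite inE => /forallP same; apply: nperm_compo => a; rewrite (eqP (same a)) hu.
Qed.

Lemma nperm_gt0 u v e :
  0 < nperm u v e ->
  (forall a, compo u a = \sum_b e (a, b)) /\ (forall b, compo v b = \sum_a e (a, b)).
Proof.
rewrite card_gt0 => /set0Pn[s]; rewrite inE => jt; split=> [a|b].
  by rewrite -(compo_permrow s) (has_jtype_rowsum a jt).
exact: has_jtype_colsum jt.
Qed.

End Permutations.

Lemma A_comp_sum (R : finComUnitRingType) n (C : {set 'rV[R]_n}) (s : R -> nat) :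
  A_comp C s = \sum_(u in C) [forall a, compo u a == s a].
Proof.
rewrite /A_comp card_set_indicator [RHS]big_mkcond.
by apply: eq_bigr => u _; case: (u \in C).
Qed.

Import GRing.Theory Num.Theory.
Local Open Scope ring_scope.

Lemma ratio_natr (k d m : nat) : (k * d)%N = m -> (0 < d)%N -> m%:R / d%:R = k%:R :> rat.
Proof. by move=> <- d_pos; rewrite natrM mulfK // pnatr_eq0 -lt0n. Qed.

Lemma prod_fact_gt0 (I : finType) (b : I -> nat) : (0 < \prod_i (b i)`!)%N.
Proof. by rewrite prodn_gt0 // => i; exact: fact_gt0. Qed.

Lemma multinom_nwords (R : finComUnitRingType) n (r : R -> nat) :
  (\sum_a r a)%N = n -> Defs.multinom n r = (nwords n r)%:R.
Proof.
move=> sum_r; rewrite /Defs.multinom -natr_prod.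
by apply: ratio_natr; rewrite ?nwords_fact ?prod_fact_gt0.
Qed.

Lemma prod_multinom_has_jtype (R : finComUnitRingType) n (v : 'rV[R]_n)
    (e : {ffun R * R -> 'I_n.+1}) :
  (forall b, compo v b = colsum e b) ->
  \prod_b Defs.multinom (colsum e b) (fun a => (e (a, b) : nat))
  = #|[set w | has_jtype w v (fun p => e p)]|%:R.
Proof.
move=> hv; rewrite /Defs.multinom prodf_div -natr_prod.
have -> : \prod_b \prod_a ((e (a, b))`!)%:R = (\prod_p (e p)`!)%:R :> rat.
  by rewrite natr_prod exchange_big pair_bigA; apply: eq_bigr => -[a b].
apply: ratio_natr; last exact: prod_fact_gt0.
rewrite (@card_has_jtype R n v (fun p => e p) (fun b => esym (hv b))).
by apply: eq_bigr => b _; rewrite hv.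
Qed.

Lemma nperm_ratio (R : finComUnitRingType) n (u v : 'rV[R]_n)
    (e : {ffun R * R -> 'I_n.+1}) :
  (nperm u v (fun p => e p))%:R / n`!%:R =
  ([forall a, compo u a == rowsum e a] && [forall b, compo v b == colsum e b] : nat)%:R
  * ((\prod_b Defs.multinom (colsum e b) (fun a => (e (a, b) : nat)))
     / Defs.multinom n (rowsum e)).
Proof.
case: andP => [[/forallP hu /forallP hv]|no_match]; last first.
  rewrite mul0r; case: (posnP (nperm u v (fun p => e p))) => [->|/nperm_gt0[hu hv]].
    by rewrite mul0r.
  by case: no_match; split; apply/forallP => a; rewrite ?hu ?hv.
have {}hu a : compo u a = rowsum e a by exact/eqP.
have {}hv b : compo v b = colsum e b by exact/eqP.
have sum_r : (\sum_a rowsum e a)%N = n.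
  by rewrite -[RHS](sum_fibre (fun i => u ord0 i)); apply: eq_bigr => a _; rewrite -hu.
rewrite mul1r (prod_multinom_has_jtype hv) (multinom_nwords sum_r).
have cK_gt0 : (0 < nwords n (rowsum e))%N.
  by move: (fact_gt0 n); rewrite -(nwords_fact sum_r) muln_gt0 => /andP[].
apply/eqP; rewrite eqr_div ?pnatr_eq0 -?lt0n ?fact_gt0 //.
by rewrite -!natrM (@nperm_nwords R n u v (fun p => e p) hu) mulnC.
Qed.

Definition xmon (R : finComUnitRingType) (e : R * R -> nat) : {mpoly rat[#|{: R * R}|]} :=
  \prod_(p : R * R) xvar p.1 p.2 ^+ e p.

Lemma sum_perm_xmon (R : finComUnitRingType) n (u v : 'rV[R]_n) :
  \sum_(s : 'S_n) xmon (fun p => eta (permrow s u) v p.1 p.2) =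
  \sum_(e : {ffun R * R -> 'I_n.+1} | bicomp e)
     (nperm u v (fun p => e p))%:R *: xmon (fun p => e p).
Proof.
rewrite (partition_big (fun s => jtype (permrow s u) v) (@bicomp R n)) => [|s _]; last first.
  exact: bicomp_jtype.
apply: eq_bigr => e _; rewrite (eq_bigl (fun s => has_jtype (permrow s u) v (fun p => e p))).
  rewrite (eq_bigr (fun _ => xmon (fun p => e p))) => [|s /forallP jt]; last first.
    by apply: eq_bigr => p _; rewrite (eqP (jt p)).
  by rewrite sumr_const scaler_nat /nperm cardsE.
by move=> s; rewrite /= jtypeP.
Qed.

Lemma sum_CJE_perm (R : finComUnitRingType) n (C D : {set 'rV[R]_n}) :
  \sum_(s : 'S_n) CJE (permcode s C) D =
  \sum_(e : {ffun R * R -> 'I_n.+1} | bicomp e)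
     (\sum_(u in C) \sum_(v in D) nperm u v (fun p => e p))%:R *: xmon (fun p => e p).
Proof.
have permcodeE s : CJE (permcode s C) D =
    \sum_(u in C) \sum_(v in D) xmon (fun p => eta (permrow s u) v p.1 p.2).
  by rewrite /CJE big_imset //= => x y _ _; exact: permrow_inj.
rewrite (eq_bigr _ (fun s _ => permcodeE s)) exchange_big /=.
under eq_bigr => u _ do rewrite exchange_big /=.
under eq_bigr => u _ do under eq_bigr => v _ do rewrite (sum_perm_xmon u v).
under [RHS]eq_bigr => e _ do rewrite natr_sum scaler_suml.
under [RHS]eq_bigr => e _ do under eq_bigr => u _ do rewrite natr_sum scaler_suml.
by rewrite [RHS]exchange_big; apply: eq_bigr => u _; rewrite exchange_big.
Qed.

Lemma average_coefficient (R : finComUnitRingType) n (C D : {set 'rV[R]_n})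
    (e : {ffun R * R -> 'I_n.+1}) :
  n`!%:R^-1 * (\sum_(u in C) \sum_(v in D) nperm u v (fun p => e p))%:R =
  (A_comp C (rowsum e))%:R * (A_comp D (colsum e))%:R
  * (\prod_b Defs.multinom (colsum e b) (fun a => (e (a, b) : nat))) / Defs.multinom n (rowsum e).
Proof.
rewrite mulrC natr_sum mulr_suml -!mulrA !A_comp_sum !natr_sum mulr_suml.
apply: eq_bigr => u _; rewrite natr_sum !mulr_suml mulr_sumr; apply: eq_bigr => v _.
by rewrite nperm_ratio -mulnb natrM -mulrA.
Qed.

Theorem theorem3p1 (R : finComUnitRingType) (hR : field_or_Zk R) (n : nat)
  (C D : {set 'rV[R]_n}) (hC : linear_code C) (hD : linear_code D) :
  CJav C D = CJav_formula C D.
Proof.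
rewrite /CJav sum_CJE_perm scaler_sumr; apply: eq_bigr => e _.
by rewrite scalerA average_coefficient.
Qed.
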